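(* Let $\alpha\in(0,1)$ and let $v(\beta)$, $\beta\in(1,1/\alpha)$, be defined by $$\frac1{v(\beta)}=\frac{\beta+1}{\beta-1}+\frac{1-\alpha}{1+\alpha}\left(\frac{\beta+3}{2(\beta-1)}+\frac{\beta(\beta+1)}{(\beta-1)^2}(s_+-s_-)+C\,s_-\right),$$ with $s_+=\frac{1-\alpha}{1-\alpha\beta}$, $s_-=\frac{1-\alpha}{1-\alpha/\beta}$, $C=\frac{2\beta}{\beta-1}-\frac{\beta-\alpha}{\beta-\alpha^2}$. Then $\frac{\partial v}{\partial\beta}>0$ at $\beta=\beta_c^{(2)}:=1/\sqrt{\alpha}$. Consequently $\beta_c^{(2)}<\beta_{\max}$, where $\beta_{\max}$ is the value of $\beta\in(1,1/\alpha)$ at which $v$ attains its maximum.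
   Context: $v(\beta)$ is the asymptotic speed of biased random walk on the random spanning tree of the ladder graph; $1/v$ is convex on $(1,1/\alpha)$, so $v$ is unimodal with a maximizer $\beta_{\max}$. *)

From Stdlib Require Import Reals.
From Coquelicot Require Import Coquelicot.
Open Scope R_scope.

Definition s_plus (alpha beta : R) : R := (1 - alpha) / (1 - alpha * beta).
Definition s_minus (alpha beta : R) : R := (1 - alpha) / (1 - alpha / beta).
Definition C_const (alpha beta : R) : R :=
  2 * beta / (beta - 1) - (beta - alpha) / (beta - alpha ^ 2).

Definition inv_speed (alpha beta : R) : R :=
  (beta + 1) / (beta - 1)
  + (1 - alpha) / (1 + alpha) *
    ( (beta + 3) / (2 * (beta - 1))
      + beta * (beta + 1) / (beta - 1) ^ 2 * (s_plus alpha beta - s_minus alpha beta)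
      + C_const alpha beta * s_minus alpha beta ).

Definition speed (alpha beta : R) : R := / inv_speed alpha beta.

Definition is_speed_maximizer (alpha bmax : R) : Prop :=
  1 < bmax < / alpha /\
  forall beta, 1 < beta < / alpha -> speed alpha beta <= speed alpha bmax.

From Stdlib Require Import Reals Lra.
From Coquelicot Require Import Coquelicot.
Open Scope R_scope.

(** On the parameter domain [0 < a < 1 < b < 1/a] the function [1/v] is a
    rational function [N/D] with [D > 0]. Its derivative has numerator [N'],
    and under the substitution [b = 1 + x], [a = 1/((1+y)(1+x)^2)], which maps
    [x > 0, y >= 0] onto the region [b > 1, a b^2 <= 1], the polynomial [-N']
    becomes one with nonnegative coefficients. Hence [1/v] strictly decreases on
    [(1, 1/sqrt a]], so [v'(1/sqrt a) > 0] and no maximiser lies at or below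
    [1/sqrt a]. In the same way [1/v - K/(1 - a b)], with
    [K = 4(1-a)^2 a/(1+a)], is positive, so [v] tends to [0] at [1/a] and is
    maximised on a compact subinterval. *)

Definition inv_speed_num (a b : R) : R := (2*a^5*b^3 - 5*a^5*b^2 - a^5*b - 5*a^4*b^3 + 2*a^4*b^2 - a^4 + 12*a^3*b^3 + 7*a^3*b^2 + 5*a^3 - a^2*b^4 - 7*a^2*b^2 - 3*a*b^4 - 6*a*b^3 - 4*a*b^2 - 7*a*b + 5*b^3 + 7*b^2).

Definition inv_speed_den (a b : R) : R := 2*(1+a)*(b-1)*(1-a*b)*(b-a)*(b-a^2).

Definition dinv_speed_num (a b : R) : R := (- 4*a^10*b^4 + 8*a^10*b^3 - 12*a^10*b^2 + 12*a^9*b^4 - 32*a^9*b^2 + 16*a^9*b + 4*a^9 + 32*a^8*b^3 + 20*a^8*b^2 + 24*a^8*b - 4*a^8 + 4*a^7*b^6 - 16*a^7*b^5 - 44*a^7*b^4 + 80*a^7*b^3 - 64*a^7*b^2 - 8*a^7*b - 16*a^7 - 8*a^6*b^6 + 8*a^6*b^5 - 76*a^6*b^4 + 48*a^6*b^3 - 148*a^6*b^2 + 48*a^6*b - 16*a^6 + 4*a^5*b^6 + 72*a^5*b^5 - 80*a^5*b^4 + 144*a^5*b^3 - 40*a^5*b^2 + 96*a^5*b - 4*a^5 + 8*a^4*b^6 + 48*a^4*b^5 - 72*a^4*b^4 + 160*a^4*b^3 - 92*a^4*b^2 + 24*a^4*b + 4*a^4 - 28*a^3*b^6 - 100*a^3*b^4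 + 48*a^3*b^3 - 104*a^3*b^2 - 8*a^3*b - 16*a^2*b^6 + 40*a^2*b^5 - 64*a^2*b^4 + 72*a^2*b^3 - 8*a^2*b^2 + 4*a*b^6 + 40*a*b^5 - 28*a*b^4 + 48*a*b^3 - 24*b^4).

Definition dinv_speed_cert (x y : R) : R :=
  10400*x^6
  + 111200*x^7
  + 575312*x^8
  + 1912096*x^9
  + 4571488*x^10
  + 8342976*x^11
  + 12035560*x^12
  + 14021400*x^13
  + 13361644*x^14
  + 10484592*x^15
  + 6785212*x^16
  + 3610488*x^17
  + 1566992*x^18
  + 546928*x^19
  + 150088*x^20
  + 31240*x^21
  + 4644*x^22
  + 440*x^23
  + 20*x^24
  + 43520*x^5*y
  + 537520*x^6*y
  + 3211744*x^7*y
  + 12322288*x^8*y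
  + 33995344*x^9*y
  + 71595032*x^10*y
  + 119278272*x^11*y
  + 160761692*x^12*y
  + 177768992*x^13*y
  + 162607680*x^14*y
  + 123478592*x^15*y
  + 77802252*x^16*y
  + 40491384*x^17*y
  + 17247776*x^18*y
  + 5923880*x^19*y
  + 1602840*x^20*y
  + 329424*x^21*y
  + 48404*x^22*y
  + 4536*x^23*y
  + 204*x^24*y
  + 64224*x^4*y^2
  + 948896*x^5*y^2
  + 6709696*x^6*y^2
  + 30220416*x^7*y^2
  + 97306920*x^8*y^2
  + 238226064*x^9*y^2
  + 460277944*x^10*y^2
  + 718826152*x^11*y^2
  + 921654244*x^12*y^2
  + 979735288*x^13*y^2
  + 868122476*x^14*y^2
  + 642237368*x^15*y^2
  + 395946008*x^16*y^2
  + 202293096*x^17*y^2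
  + 84806196*x^18*y^2
  + 28722288*x^19*y^2
  + 7674604*x^20*y^2
  + 1559328*x^21*y^2
  + 226672*x^22*y^2
  + 21024*x^23*y^2
  + 936*x^24*y^2
  + 45952*x^3*y^3
  + 825952*x^4*y^3
  + 6999504*x^5*y^3
  + 37369048*x^6*y^3
  + 141466656*x^7*y^3
  + 404764976*x^8*y^3
  + 910191952*x^9*y^3
  + 1650190732*x^10*y^3
  + 2453788904*x^11*y^3
  + 3026649804*x^12*y^3
  + 3118512552*x^13*y^3
  + 2693347160*x^14*y^3
  + 1950359432*x^15*y^3
  + 1180770096*x^16*y^3
  + 593880600*x^17*y^3
  + 245563284*x^18*y^3
  + 82149424*x^19*y^3
  + 21705124*x^20*y^3
  + 4364160*x^21*y^3
  + 628112*x^22*y^3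
  + 57696*x^23*y^3
  + 2544*x^24*y^3
  + 17344*x^2*y^4
  + 389472*x^3*y^4
  + 4021936*x^4*y^4
  + 25738904*x^5*y^4
  + 115466908*x^6*y^4
  + 388288576*x^7*y^4
  + 1020177028*x^8*y^4
  + 2152388712*x^9*y^4
  + 3715535372*x^10*y^4
  + 5315577744*x^11*y^4
  + 6356202484*x^12*y^4
  + 6384900568*x^13*y^4
  + 5399042604*x^14*y^4
  + 3840294384*x^15*y^4
  + 2289395108*x^16*y^4
  + 1136031096*x^17*y^4
  + 464114356*x^18*y^4
  + 153572944*x^19*y^4
  + 40167036*x^20*y^4
  + 7999152*x^21*y^4
  + 1140664*x^22*y^4
  + 103824*x^23*y^4
  + 4536*x^24*y^4
  + 3328*x*y^5
  + 99664*x^2*y^5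
  + 1298368*x^3*y^5
  + 10168324*x^4*y^5
  + 54777824*x^5*y^5
  + 218423960*x^6*y^5
  + 674549456*x^7*y^5
  + 1662671580*x^8*y^5
  + 3339578664*x^9*y^5
  + 5545959220*x^10*y^5
  + 7691610912*x^11*y^5
  + 8967225088*x^12*y^5
  + 8820323952*x^13*y^5
  + 7327391960*x^14*y^5
  + 5133325568*x^15*y^5
  + 3019964756*x^16*y^5
  + 1481035944*x^17*y^5
  + 598666356*x^18*y^5
  + 196164864*x^19*y^5
  + 50836772*x^20*y^5
  + 10034976*x^21*y^5
  + 1418648*x^22*y^5
  + 128016*x^23*y^5
  + 5544*x^24*y^5
  + 256*y^6
  + 12608*x*y^6
  + 225328*x^2*y^6
  + 2255752*x^3*y^6
  + 14973060*x^4*y^6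
  + 71959544*x^5*y^6
  + 264032220*x^6*y^6
  + 765758792*x^7*y^6
  + 1797848568*x^8*y^6
  + 3474857992*x^9*y^6
  + 5594956660*x^10*y^6
  + 7566209640*x^11*y^6
  + 8638540504*x^12*y^6
  + 8348979496*x^13*y^6
  + 6832520468*x^14*y^6
  + 4724714712*x^15*y^6
  + 2747819192*x^16*y^6
  + 1333729464*x^17*y^6
  + 534049116*x^18*y^6
  + 173453840*x^19*y^6
  + 44574740*x^20*y^6
  + 8727264*x^21*y^6
  + 1223824*x^22*y^6
  + 109536*x^23*y^6
  + 4704*x^24*y^6
  + 576*y^7
  + 18304*x*y^7
  + 259140*x^2*y^7
  + 2233544*x^3*y^7
  + 13345620*x^4*y^7
  + 59337912*x^5*y^7
  + 205144360*x^6*y^7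
  + 567875192*x^7*y^7
  + 1284595656*x^8*y^7
  + 2409203096*x^9*y^7
  + 3784427040*x^10*y^7
  + 5013719496*x^11*y^7
  + 5626140416*x^12*y^7
  + 5357899304*x^13*y^7
  + 4329074568*x^14*y^7
  + 2960152648*x^15*y^7
  + 1704390728*x^16*y^7
  + 819755016*x^17*y^7
  + 325477916*x^18*y^7
  + 104869328*x^19*y^7
  + 26742444*x^20*y^7
  + 5196288*x^21*y^7
  + 723152*x^22*y^7
  + 64224*x^23*y^7
  + 2736*x^24*y^7
  + 480*y^8
  + 12816*x*y^8
  + 160924*x^2*y^8
  + 1270176*x^3*y^8
  + 7096732*x^4*y^8
  + 29936904*x^5*y^8
  + 99236628*x^6*y^8
  + 265485624*x^7*y^8
  + 583940004*x^8*y^8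
  + 1069906560*x^9*y^8
  + 1648029912*x^10*y^8
  + 2147362208*x^11*y^8
  + 2375539608*x^12*y^8
  + 2234448176*x^13*y^8
  + 1785844968*x^14*y^8
  + 1209334032*x^15*y^8
  + 690208296*x^16*y^8
  + 329285040*x^17*y^8
  + 129748044*x^18*y^8
  + 41501184*x^19*y^8
  + 10508044*x^20*y^8
  + 2027400*x^21*y^8
  + 280132*x^22*y^8
  + 24696*x^23*y^8
  + 1044*x^24*y^8
  + 176*y^9
  + 4352*x*y^9
  + 51404*x^2*y^9
  + 386104*x^3*y^9
  + 2071076*x^4*y^9
  + 8445584*x^5*y^9
  + 27211268*x^6*y^9
  + 71068056*x^7*y^9
  + 153144636*x^8*y^9
  + 275702464*x^9*y^9
  + 418269496*x^10*y^9
  + 537828592*x^11*y^9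
  + 588095144*x^12*y^9
  + 547487584*x^13*y^9
  + 433540936*x^14*y^9
  + 291128944*x^15*y^9
  + 164877288*x^16*y^9
  + 78092736*x^17*y^9
  + 30559676*x^18*y^9
  + 9709784*x^19*y^9
  + 2442356*x^20*y^9
  + 468112*x^21*y^9
  + 64244*x^22*y^9
  + 5624*x^23*y^9
  + 236*x^24*y^9
  + 24*y^10
  + 576*x*y^10
  + 6624*x^2*y^10
  + 48576*x^3*y^10
  + 255024*x^4*y^10
  + 1020096*x^5*y^10
  + 3230304*x^6*y^10
  + 8306496*x^7*y^10
  + 17651304*x^8*y^10
  + 31380096*x^9*y^10
  + 47070144*x^10*y^10
  + 59907456*x^11*y^10
  + 64899744*x^12*y^10
  + 59907456*x^13*y^10
  + 47070144*x^14*y^10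
  + 31380096*x^15*y^10
  + 17651304*x^16*y^10
  + 8306496*x^17*y^10
  + 3230304*x^18*y^10
  + 1020096*x^19*y^10
  + 255024*x^20*y^10
  + 48576*x^21*y^10
  + 6624*x^22*y^10
  + 576*x^23*y^10
  + 24*x^24*y^10.
Definition inv_speed_excess_cert (x y : R) : R :=
  24*x^3
  + 96*x^4
  + 110*x^5
  + 66*x^6
  + 28*x^7
  + 10*x^8
  + 2*x^9
  + 112*x^2*y
  + 612*x^3*y
  + 1254*x^4*y
  + 1343*x^5*y
  + 869*x^6*y
  + 368*x^7*y
  + 103*x^8*y
  + 15*x^9*y
  + 112*x*y^2
  + 948*x^2*y^2
  + 3051*x^3*y^2
  + 5198*x^4*y^2
  + 5310*x^5*y^2
  + 3436*x^6*y^2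
  + 1428*x^7*y^2
  + 364*x^8*y^2
  + 45*x^9*y^2
  + 32*y^3
  + 492*x*y^3
  + 2515*x^2*y^3
  + 6563*x^3*y^3
  + 10173*x^4*y^3
  + 9999*x^5*y^3
  + 6370*x^6*y^3
  + 2592*x^7*y^3
  + 626*x^8*y^3
  + 70*x^9*y^3
  + 72*y^4
  + 724*x*y^4
  + 3038*x^2*y^4
  + 7124*x^3*y^4
  + 10410*x^4*y^4
  + 9912*x^5*y^4
  + 6194*x^6*y^4
  + 2468*x^7*y^4
  + 574*x^8*y^4
  + 60*x^9*y^4
  + 52*y^5
  + 453*x*y^5
  + 1735*x^2*y^5
  + 3836*x^3*y^5
  + 5397*x^4*y^5
  + 5012*x^5*y^5
  + 3073*x^6*y^5
  + 1200*x^7*y^5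
  + 271*x^8*y^5
  + 27*x^9*y^5
  + 12*y^6
  + 101*x*y^6
  + 376*x^2*y^6
  + 812*x^3*y^6
  + 1120*x^4*y^6
  + 1022*x^5*y^6
  + 616*x^6*y^6
  + 236*x^7*y^6
  + 52*x^8*y^6
  + 5*x^9*y^6.

Definition inv_speed_blowup_const (a : R) : R := 4 * (1 - a)^2 * a / (1 + a).

(* The numerator of [inv_speed a b - inv_speed_blowup_const a / (1 - a b)]
   over [inv_speed_den a b]. *)
Definition inv_speed_excess_num (a b : R) : R :=
  inv_speed_num a b - 8 * (1 - a)^2 * a * (b - 1) * (b - a) * (b - a^2).

Ltac nonneg_monomials := repeat apply Rmult_le_pos; try apply pow_le; lra.

Lemma dinv_speed_cert_pos x y : 0 < x -> 0 <= y -> 0 < dinv_speed_cert x y.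
Proof.
  intros Hx Hy; unfold dinv_speed_cert.
  repeat (apply Rplus_lt_le_0_compat; [| nonneg_monomials]).
  apply Rmult_lt_0_compat; [lra | apply pow_lt; lra].
Qed.

Lemma inv_speed_excess_cert_pos x y : 0 < x -> 0 <= y -> 0 < inv_speed_excess_cert x y.
Proof.
  intros Hx Hy; unfold inv_speed_excess_cert.
  repeat (apply Rplus_lt_le_0_compat; [| nonneg_monomials]).
  apply Rmult_lt_0_compat; [lra | apply pow_lt; lra].
Qed.

Lemma dinv_speed_num_subst x y : 0 < x -> 0 <= y ->
  dinv_speed_num (/ ((1 + y) * (1 + x)^2)) (1 + x) * (1 + x)^20 * (1 + y)^10
  = - dinv_speed_cert x y.
Proof.
  intros Hx Hy; unfold dinv_speed_num, dinv_speed_cert.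
  field; split; apply Rgt_not_eq; lra.
Qed.

Lemma inv_speed_excess_num_subst x y : 0 < x -> 0 <= y ->
  inv_speed_excess_num (/ ((1 + x) * (1 + y))) (1 + x) * ((1 + x) * (1 + y))^6
  = inv_speed_excess_cert x y.
Proof.
  intros Hx Hy; unfold inv_speed_excess_num, inv_speed_num, inv_speed_excess_cert.
  field; split; apply Rgt_not_eq; lra.
Qed.

Lemma Rinv_ge_1 u : 0 < u <= 1 -> 1 <= / u.
Proof. intros Hu; rewrite <- Rinv_1; apply Rinv_le_contravar; lra. Qed.

Lemma dinv_speed_num_neg a b : 0 < a -> 1 < b -> a * b^2 <= 1 -> dinv_speed_num a b < 0.
Proof.
  intros Ha Hb Hab.
  assert (Hab0 : 0 < a * b^2) by (apply Rmult_lt_0_compat; [lra | apply pow_lt; lra]).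
  set (x := b - 1); set (y := / (a * b^2) - 1).
  assert (Hx : 0 < x) by (unfold x; lra).
  assert (Hy : 0 <= y) by (pose proof (Rinv_ge_1 (a * b^2)); unfold y; lra).
  assert (Ea : a = / ((1 + y) * (1 + x)^2)).
  { unfold x, y; replace (1 + (/ (a * b^2) - 1)) with (/ (a * b^2)) by ring.
    replace (1 + (b - 1)) with b by ring; field; split; lra. }
  assert (Eb : b = 1 + x) by (unfold x; ring).
  pose proof (dinv_speed_num_subst x y Hx Hy) as E; rewrite <- Ea, <- Eb in E.
  pose proof (dinv_speed_cert_pos x y Hx Hy).
  assert (0 < b^20 * (1 + y)^10) by (apply Rmult_lt_0_compat; apply pow_lt; lra).
  nra.
Qed.

Lemma inv_speed_excess_num_pos a b : 0 < a -> 1 < b -> a * b < 1 ->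
  0 < inv_speed_excess_num a b.
Proof.
  intros Ha Hb Hab.
  assert (Hab0 : 0 < a * b) by nra.
  set (x := b - 1); set (y := / (a * b) - 1).
  assert (Hx : 0 < x) by (unfold x; lra).
  assert (Hy : 0 <= y) by (pose proof (Rinv_ge_1 (a * b)); unfold y; lra).
  assert (Ea : a = / ((1 + x) * (1 + y))).
  { unfold x, y; replace (1 + (/ (a * b) - 1)) with (/ (a * b)) by ring.
    replace (1 + (b - 1)) with b by ring; field; split; lra. }
  assert (Eb : b = 1 + x) by (unfold x; ring).
  pose proof (inv_speed_excess_num_subst x y Hx Hy) as E; rewrite <- Ea, <- Eb in E.
  pose proof (inv_speed_excess_cert_pos x y Hx Hy).
  assert (0 < ((1 + x) * (1 + y))^6) by (apply pow_lt; nra).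
  nra.
Qed.

Lemma mul_lt_1_of_lt_inv a b : 0 < a -> b < / a -> a * b < 1.
Proof.
  intros Ha Hb; apply Rmult_lt_reg_l with (/ a); [now apply Rinv_0_lt_compat|].
  rewrite <- Rmult_assoc, Rinv_l by lra; lra.
Qed.

Lemma inv_speed_blowup_const_pos a : 0 < a < 1 -> 0 < inv_speed_blowup_const a.
Proof.
  intros Ha; unfold inv_speed_blowup_const.
  assert (0 < (1 - a)^2) by (apply pow_lt; lra).
  apply Rdiv_lt_0_compat; nra.
Qed.

Lemma is_derive_continuity_pt (f : R -> R) x l : is_derive f x l -> continuity_pt f x.
Proof.
  intros Hf; apply derivable_continuous_pt; exists l; now apply is_derive_Reals.
Qed.

Section SpeedOnDomain.

Variables a b : R.
Hypothesis Ha : 0 < a < 1.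
Hypothesis Hb : 1 < b < / a.

Let Hab : a * b < 1.
Proof. apply mul_lt_1_of_lt_inv; lra. Qed.

Let Ha2 : a^2 < a.
Proof. nra. Qed.

Lemma inv_speed_den_pos : 0 < inv_speed_den a b.
Proof. unfold inv_speed_den; repeat apply Rmult_lt_0_compat; nra. Qed.

Lemma inv_speed_fraction : inv_speed a b = inv_speed_num a b / inv_speed_den a b.
Proof.
  unfold inv_speed, s_plus, s_minus, C_const, inv_speed_num, inv_speed_den.
  field; repeat split; nra.
Qed.

Lemma is_derive_inv_speed :
  is_derive (inv_speed a) b (dinv_speed_num a b / (inv_speed_den a b)^2).
Proof.
  assert (a * / b < 1).
  { apply Rmult_lt_reg_r with b; [lra|]; rewrite Rmult_assoc, Rinv_l by lra; lra. }
  assert (0 < / b) by (apply Rinv_0_lt_compat; lra).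
  unfold inv_speed, s_plus, s_minus, C_const; auto_derive.
  - repeat split; try exact I; intro; nra.
  - unfold dinv_speed_num, inv_speed_den; field; repeat split; nra.
Qed.

Lemma inv_speed_gt_blowup : inv_speed_blowup_const a / (1 - a * b) < inv_speed a b.
Proof.
  pose proof inv_speed_den_pos.
  pose proof (inv_speed_excess_num_pos a b ltac:(lra) ltac:(lra) Hab).
  assert (inv_speed a b - inv_speed_blowup_const a / (1 - a * b)
          = inv_speed_excess_num a b / inv_speed_den a b).
  { rewrite inv_speed_fraction.
    unfold inv_speed_blowup_const, inv_speed_excess_num, inv_speed_den.
    field; repeat split; nra. }
  assert (0 < inv_speed_excess_num a b / inv_speed_den a b)
    by (apply Rdiv_lt_0_compat; assumption).
  lra.
Qed.

Lemma inv_speed_pos : 0 < inv_speed a b.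
Proof.
  pose proof inv_speed_gt_blowup.
  assert (0 < inv_speed_blowup_const a / (1 - a * b)).
  { apply Rdiv_lt_0_compat; [now apply inv_speed_blowup_const_pos | lra]. }
  lra.
Qed.

Lemma is_derive_speed :
  is_derive (speed a) b
    (- (dinv_speed_num a b / (inv_speed_den a b)^2) / (inv_speed a b)^2).
Proof.
  apply is_derive_inv; [exact is_derive_inv_speed | apply Rgt_not_eq, inv_speed_pos].
Qed.

End SpeedOnDomain.

Lemma speed_lt_of_inv_speed_lt a x y : 0 < inv_speed a x ->
  inv_speed a x < inv_speed a y -> speed a y < speed a x.
Proof. intros; unfold speed; apply Rinv_lt_contravar; nra. Qed.

Lemma inv_speed_decreasing a b c : 0 < a < 1 -> 1 < b < c -> a * c^2 <= 1 ->
  inv_speed a c < inv_speed a b.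
Proof.
  intros Ha Hbc Hac.
  assert (Hc : c < / a).
  { apply Rmult_lt_reg_l with a; [lra|]; rewrite Rinv_r by lra; nra. }
  destruct (MVT_gen (inv_speed a) b c
              (fun z => dinv_speed_num a z / (inv_speed_den a z)^2)) as [z [Hz E]];
    rewrite ?Rmin_left, ?Rmax_right in * by lra.
  - intros z Hz; apply is_derive_inv_speed; lra.
  - intros z Hz; eapply is_derive_continuity_pt, is_derive_inv_speed; lra.
  - assert (dinv_speed_num a z < 0).
    { apply dinv_speed_num_neg; try lra.
      assert (z^2 <= c^2) by (simpl; nra).
      nra. }
    assert (0 < (inv_speed_den a z)^2) by (apply pow_lt, inv_speed_den_pos; lra).
    assert (dinv_speed_num a z / (inv_speed_den a z)^2 < 0)
      by (apply Rdiv_neg_pos; assumption).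
    nra.
Qed.

Lemma inv_sqrt_bounds a : 0 < a < 1 ->
  1 < / sqrt a < / a /\ a * (/ sqrt a)^2 = 1.
Proof.
  intros Ha.
  pose proof (sqrt_lt_R0 a (proj1 Ha)).
  pose proof (sqrt_sqrt a (Rlt_le _ _ (proj1 Ha))) as Hss.
  assert (sqrt a < 1) by nra.
  repeat split.
  - rewrite <- Rinv_1; apply Rinv_lt_contravar; lra.
  - apply Rinv_lt_contravar; nra.
  - rewrite <- Hss at 1; field; lra.
Qed.

Lemma speed_lt_at_inv_sqrt a b : 0 < a < 1 -> 1 < b < / sqrt a ->
  speed a b < speed a (/ sqrt a).
Proof.
  intros Ha Hb; destruct (inv_sqrt_bounds a Ha) as [Hc Hac].
  apply speed_lt_of_inv_speed_lt; [apply inv_speed_pos; lra|].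
  apply inv_speed_decreasing; lra.
Qed.

Lemma speed_deriv_pos_at_inv_sqrt a : 0 < a < 1 ->
  exists d, is_derive (speed a) (/ sqrt a) d /\ 0 < d.
Proof.
  intros Ha; destruct (inv_sqrt_bounds a Ha) as [Hc Hac].
  set (c := / sqrt a) in *.
  eexists; split; [apply is_derive_speed; assumption|].
  pose proof (dinv_speed_num_neg a c ltac:(lra) ltac:(lra) ltac:(lra)).
  assert (0 < (inv_speed_den a c)^2) by (apply pow_lt, inv_speed_den_pos; assumption).
  assert (0 < (inv_speed a c)^2) by (apply pow_lt, inv_speed_pos; assumption).
  assert (dinv_speed_num a c / (inv_speed_den a c)^2 < 0)
    by (apply Rdiv_neg_pos; assumption).
  apply Rdiv_lt_0_compat; lra.
Qed.

Lemma inv_speed_large_near_end a M : 0 < a < 1 -> 0 < M ->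
  exists q, q < / a /\ forall b, 1 < b < / a -> q < b -> M < inv_speed a b.
Proof.
  intros Ha HM.
  pose proof (inv_speed_blowup_const_pos a Ha).
  set (K := inv_speed_blowup_const a) in *.
  assert (HKM : 0 < K / M) by (apply Rdiv_lt_0_compat; assumption).
  exists ((1 - K / M) / a); split.
  { assert ((1 - K / M) / a = / a - (K / M) / a) by (field; lra).
    assert (0 < (K / M) / a) by (apply Rdiv_lt_0_compat; lra).
    lra. }
  intros b Hb Hqb.
  pose proof (inv_speed_gt_blowup a b Ha Hb) as Hlow; fold K in Hlow.
  pose proof (mul_lt_1_of_lt_inv a b ltac:(lra) ltac:(lra)).
  assert (Hab : 1 - K / M < a * b).
  { apply (Rmult_lt_compat_l a) in Hqb; [|lra].
    replace (a * ((1 - K / M) / a)) with (1 - K / M) in Hqb by (field; lra); lra. }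
  assert (M * (1 - a * b) < K).
  { apply (Rmult_lt_compat_l M) in Hab; [|lra].
    replace (M * (1 - K / M)) with (M - K) in Hab by (field; lra); lra. }
  assert (M < K / (1 - a * b)).
  { apply Rmult_lt_reg_r with (1 - a * b); [lra|].
    unfold Rdiv; rewrite Rmult_assoc, Rinv_l by lra; lra. }
  lra.
Qed.

Lemma speed_maximizer_exists a : 0 < a < 1 -> exists bmax, is_speed_maximizer a bmax.
Proof.
  intros Ha; destruct (inv_sqrt_bounds a Ha) as [Hc Hac].
  set (c := / sqrt a) in *.
  destruct (inv_speed_large_near_end a (inv_speed a c) Ha (inv_speed_pos a c Ha Hc))
    as [q0 [Hq0 Hlarge]].
  set (q := Rmax c q0).
  assert (Hcq : c <= q) by apply Rmax_l.
  assert (Hq0q : q0 <= q) by apply Rmax_r.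
  assert (Hq : q < / a) by (apply Rmax_lub_lt; lra).
  destruct (continuity_ab_maj (speed a) c q Hcq) as [bmax [Hmax Hbmax]].
  { intros z Hz; eapply is_derive_continuity_pt, is_derive_speed; lra. }
  exists bmax; split; [lra|].
  intros b Hb.
  assert (speed a c <= speed a bmax) by (apply Hmax; lra).
  destruct (Rlt_or_le b c) as [Hbc|Hcb].
  - assert (speed a b < speed a c) by (apply speed_lt_at_inv_sqrt; fold c; lra).
    lra.
  - destruct (Rle_or_lt b q) as [Hbq|Hqb]; [apply Hmax; lra|].
    assert (speed a b < speed a c).
    { apply speed_lt_of_inv_speed_lt; [apply inv_speed_pos; lra|].
      apply Hlarge; lra. }
    lra.
Qed.

Lemma speed_maximizer_gt_inv_sqrt a bmax : 0 < a < 1 ->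
  is_speed_maximizer a bmax -> / sqrt a < bmax.
Proof.
  intros Ha [Hbmax Hmax]; destruct (inv_sqrt_bounds a Ha) as [Hc Hac].
  destruct (Rlt_or_le (/ sqrt a) bmax) as [|Hle]; [assumption|exfalso].
  destruct (Rle_lt_or_eq_dec _ _ Hle) as [Hlt|Heq].
  - pose proof (speed_lt_at_inv_sqrt a bmax Ha ltac:(lra)).
    pose proof (Hmax (/ sqrt a) ltac:(lra)).
    lra.
  - (* an interior maximum at [1/sqrt a] would force [v'(1/sqrt a) = 0] *)
    destruct (speed_deriv_pos_at_inv_sqrt a Ha) as [d [Hd Hdpos]].
    apply is_derive_Reals in Hd; rewrite Heq in Hmax.
    pose proof (deriv_maximum (speed a) 1 (/ a) (/ sqrt a) (exist _ d Hd)
                  ltac:(lra) ltac:(lra) (fun x Hx1 Hx2 => Hmax x (conj Hx1 Hx2))) as H0.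
    rewrite (derive_pt_eq_0 _ _ _ _ Hd) in H0; lra.
Qed.

Theorem mainTheorem5 (alpha : R) (Ha : 0 < alpha < 1) :
  (exists d : R, is_derive (speed alpha) (/ sqrt alpha) d /\ 0 < d)
  /\ (exists bmax : R, is_speed_maximizer alpha bmax)
  /\ (forall bmax : R, is_speed_maximizer alpha bmax -> / sqrt alpha < bmax).
Proof.
  split; [|split].
  - exact (speed_deriv_pos_at_inv_sqrt alpha Ha).
  - exact (speed_maximizer_exists alpha Ha).
  - intros bmax; exact (speed_maximizer_gt_inv_sqrt alpha bmax Ha).
Qed.
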